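(* Let $V^*$ be as below. (i) For $(t,x)$ with $0\le t<1$ and $x>C^*\sqrt{1-t}$, $\mathcal{L}V^*(t,x)=0$. (ii) For $(t,x)$ with $0\le t<1$ and $x<C^*\sqrt{1-t}$, $\mathcal{L}V^*(t,x)\le0$.
   Context: For a function $\xi(t,x)$ of class $C^{1}$ in $t$ and $C^{2}$ in $x$, define $$\mathcal{L}\xi=\frac{\partial\xi}{\partial t}-\frac{x}{1-t}\frac{\partial\xi}{\partial x}+\frac12\frac{\partial^2\xi}{\partial x^2}.$$ $\Phi$ is the standard normal distribution function. $B^*\approx0.84$ is the unique positive solution of $\sqrt{2\pi}(1-B^2)e^{B^2/2}\Phi(B)=B$. Define $U(t,x)=\sqrt{2\pi(1-t)}(1-(B^* )^2)e^{x^2/(2(1-t))}\Phi(x/\sqrt{1-t})$ for $x<B^*\sqrt{1-t}$, and $U(t,x)=x$ otherwise. Set $f=U-x$. For $C\le B^*$ let $v(C)=\frac{1}{\Phi(-C)}[(1-(B^* )^2)\Phi(C)-Ce^{-C^2/2}/\sqrt{2\pi}]$ and $u(C)=1-(B^* )^2-(1-C^2)\Phi(-C)-\frac{C}{\sqrt{2\pi}}e^{-C^2/2}$. $C^*$ is the unique negative zero of $u$. $V^*(t,x)=\sqrt{1-t}\sqrt{2\pi}\Phi(-x/\sqrt{1-t})e^{x^2/(2(1-t))}v(C^* )$ for $x>C^*\sqrt{1-t}$, and $V^*(t,x)=f(t,x)$ for $x\le C^*\sqrt{1-t}$. *)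

From Stdlib Require Import Reals.
From Coquelicot Require Import Coquelicot.
Open Scope R_scope.

(* Standard normal distribution function:
   Phi x = 1/2 + (1/sqrt(2 pi)) * int_0^x exp(-s^2/2) ds
   (equal to int_{-oo}^x of the standard normal density). *)
Definition Phi (x : R) : R :=
  / 2 + / sqrt (2 * PI) * RInt (fun s => exp (- s ^ 2 / 2)) 0 x.

Definition Beq (B : R) : Prop :=
  sqrt (2 * PI) * (1 - B ^ 2) * exp (B ^ 2 / 2) * Phi B = B.

Definition U (Bs t x : R) : R :=
  if Rlt_dec x (Bs * sqrt (1 - t)) then
    sqrt (2 * PI * (1 - t)) * (1 - Bs ^ 2) * exp (x ^ 2 / (2 * (1 - t)))
      * Phi (x / sqrt (1 - t))
  else x.

Definition f (Bs t x : R) : R := U Bs t x - x.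

Definition v (Bs C : R) : R :=
  / Phi (- C) * ((1 - Bs ^ 2) * Phi C - C * exp (- C ^ 2 / 2) / sqrt (2 * PI)).

Definition u (Bs C : R) : R :=
  1 - Bs ^ 2 - (1 - C ^ 2) * Phi (- C) - C / sqrt (2 * PI) * exp (- C ^ 2 / 2).

Definition Vstar (Bs Cs t x : R) : R :=
  if Rlt_dec (Cs * sqrt (1 - t)) x then
    sqrt (1 - t) * sqrt (2 * PI) * Phi (- x / sqrt (1 - t))
      * exp (x ^ 2 / (2 * (1 - t))) * v Bs Cs
  else f Bs t x.

Definition dt (xi : R -> R -> R) (t x : R) : R := Derive (fun s => xi s x) t.
Definition dx (xi : R -> R -> R) (t x : R) : R := Derive (fun y => xi t y) x.
Definition dxx (xi : R -> R -> R) (t x : R) : R :=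
  Derive (fun y => Derive (fun z => xi t z) y) x.

Definition L_defined (xi : R -> R -> R) (t x : R) : Prop :=
  ex_derive (fun s => xi s x) t /\
  ex_derive (fun y => xi t y) x /\
  ex_derive (fun y => Derive (fun z => xi t z) y) x.

Definition Lop (xi : R -> R -> R) (t x : R) : R :=
  dt xi t x - x / (1 - t) * dx xi t x + / 2 * dxx xi t x.

From Pilot Require Import Defs.
From Stdlib Require Import Reals Lra Psatz.
From Coquelicot Require Import Coquelicot.
Open Scope R_scope.

(* On each side of the free boundary x = C* sqrt(1-t), V* is an affine combination
   a h(t,x) + b x of a self-similar function h(t,x) = sqrt(1-t) R(+-x / sqrt(1-t)),
   where R = Phi / Phi' satisfies R' = 1 + z R: above the boundary V* is a constant
   multiple of h with the minus sign, below it V* = f = (1 - B*^2) h - x with the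
   plus sign.  The ODE for R makes L h = 0, so L V* = - b x / (1-t); this vanishes
   above the boundary, and below it b = -1 and x < C* sqrt(1-t) <= 0.  Only the signs
   of B* and C* matter here: their defining equations are what make V* smooth across
   the boundary, which this statement does not involve. *)

Lemma sqrt_2PI_gt0 : 0 < sqrt (2 * PI).
Proof. apply sqrt_lt_R0; generalize PI_RGT_0; lra. Qed.

Lemma is_derive_Phi z : is_derive Phi z (exp (- z ^ 2 / 2) / sqrt (2 * PI)).
Proof.
  set (g s := exp (- s ^ 2 / 2)).
  assert (g_cont : forall s, continuous g s).
  { intros s; apply (ex_derive_continuous g); unfold g; auto_derive; auto. }
  assert (dI : is_derive (fun b => RInt g 0 b) z (g z)).
  { apply (is_derive_RInt g _ 0); [|apply g_cont].
    apply filter_forall; intros b; apply (@RInt_correct R_CompleteNormedModule).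
    apply (@ex_RInt_continuous R_CompleteNormedModule); intros; apply g_cont. }
  unfold Phi; fold g.
  evar (l : R); assert (H : is_derive (fun b => / 2 + / sqrt (2 * PI) * RInt g 0 b) z l).
  { apply (@is_derive_plus R_AbsRing R_NormedModule);
      [apply is_derive_const | apply is_derive_scal, dI]. }
  subst l; rewrite plus_zero_l in H.
  replace (exp (- z ^ 2 / 2) / sqrt (2 * PI)) with (/ sqrt (2 * PI) * g z)
    by (unfold g, Rdiv; ring).
  exact H.
Qed.

Lemma Derive_Phi z : Derive (fun y => Phi y) z = exp (- z ^ 2 / 2) / sqrt (2 * PI).
Proof. apply is_derive_unique, is_derive_Phi. Qed.

Definition Phi_ratio (z : R) : R := sqrt (2 * PI) * Phi z * exp (z ^ 2 / 2).

Lemma is_derive_Phi_ratio z : is_derive Phi_ratio z (1 + z * Phi_ratio z).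
Proof.
  unfold Phi_ratio; auto_derive.
  - eexists; apply is_derive_Phi.
  - rewrite Derive_Phi.
    replace (exp (- z ^ 2 / 2)) with (/ exp (z ^ 2 / 2))
      by (rewrite <- exp_Ropp; f_equal; field).
    replace (z * (z * 1) * / 2) with (z ^ 2 / 2) by field.
    pose proof sqrt_2PI_gt0; pose proof (exp_pos (z ^ 2 / 2)).
    field; lra.
Qed.

Lemma Derive_Phi_ratio z : Derive (fun y => Phi_ratio y) z = 1 + z * Phi_ratio z.
Proof. apply is_derive_unique, is_derive_Phi_ratio. Qed.

Definition self_similar (sigma t x : R) : R := sqrt (1 - t) * Phi_ratio (sigma * x / sqrt (1 - t)).

Section SelfSimilar.

Variables (sigma t : R).
Hypothesis sigma_sign : sigma = 1 \/ sigma = -1.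
Hypothesis t_lt1 : t < 1.

Lemma is_derive_self_similar_x x :
  is_derive (self_similar sigma t) x (sigma + x / (1 - t) * self_similar sigma t x).
Proof.
  unfold self_similar; auto_derive; [eexists; apply is_derive_Phi_ratio |].
  rewrite Derive_Phi_ratio; unfold Rdiv.
  set (p := Phi_ratio _); set (r := sqrt (1 - t)).
  assert (r_pos : 0 < r) by (apply sqrt_lt_R0; lra).
  replace (1 - t) with (r * r) by (apply sqrt_sqrt; lra).
  destruct sigma_sign as [-> | ->]; field; lra.
Qed.

Lemma is_derive_self_similar_t x :
  is_derive (fun s => self_similar sigma s x) t
    (((x ^ 2 / (1 - t) - 1) * self_similar sigma t x + sigma * x) / (2 * (1 - t))).
Proof.
  assert (r_pos : 0 < sqrt (1 - t)) by (apply sqrt_lt_R0; lra).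
  unfold self_similar, Rminus in *; auto_derive.
  - repeat split; try lra; eexists; apply is_derive_Phi_ratio.
  - rewrite Derive_Phi_ratio; unfold Rdiv.
    set (p := Phi_ratio _); set (r := sqrt (1 + - t)) in *.
    replace (1 + - t) with (r * r) by (apply sqrt_sqrt; lra).
    destruct sigma_sign as [-> | ->]; field; lra.
Qed.

End SelfSimilar.

Lemma Lop_eq_loc (V G : R -> R -> R) (Gx : R -> R) (t x gt gxx : R) :
  locally t (fun s => V s x = G s x) ->
  locally x (fun y => V t y = G t y) ->
  is_derive (fun s => G s x) t gt ->
  (forall y, is_derive (G t) y (Gx y)) ->
  is_derive Gx x gxx ->
  L_defined V t x /\ Lop V t x = gt - x / (1 - t) * Gx x + / 2 * gxx.
Proof.
  intros Vt Vx Gt_der Gx_der Gxx_der.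
  assert (Vt_der : is_derive (fun s => V s x) t gt).
  { apply (is_derive_ext_loc (fun s => G s x)); [|exact Gt_der].
    eapply filter_imp; [|exact Vt]; intros s Hs; now rewrite Hs. }
  assert (Gx_eq_loc : locally x (fun y => Gx y = Derive (V t) y)).
  { eapply filter_imp; [|exact (locally_locally _ _ Vx)]; intros y Hy.
    rewrite (Derive_ext_loc _ (G t)); [symmetry; apply is_derive_unique, Gx_der | exact Hy]. }
  assert (Vx_der : is_derive (V t) x (Gx x)).
  { apply (is_derive_ext_loc (G t)); [|apply Gx_der].
    eapply filter_imp; [|exact Vx]; intros y Hy; now rewrite Hy. }
  assert (Vxx_der : is_derive (Derive (V t)) x gxx)
    by (apply (is_derive_ext_loc Gx); assumption).
  assert (Vt_eq : Derive (fun s => V s x) t = gt) by now apply is_derive_unique.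
  assert (Vx_eq : Derive (fun y => V t y) x = Gx x) by now apply is_derive_unique.
  assert (Vxx_eq : Derive (fun y => Derive (fun z => V t z) y) x = gxx)
    by now apply is_derive_unique.
  unfold L_defined, Lop, dt, dx, dxx; rewrite Vt_eq, Vx_eq, Vxx_eq.
  repeat split; eexists; eassumption.
Qed.

Lemma Lop_self_similar_affine (V : R -> R -> R) (sigma a b t x : R) :
  sigma = 1 \/ sigma = -1 -> t < 1 ->
  locally t (fun s => V s x = a * self_similar sigma s x + b * x) ->
  locally x (fun y => V t y = a * self_similar sigma t y + b * y) ->
  L_defined V t x /\ Lop V t x = - b * x / (1 - t).
Proof.
  intros sigma_sign t_lt1 Vt Vx.
  destruct (Lop_eq_loc V (fun s y => a * self_similar sigma s y + b * y)
    (fun y => a * (sigma + y / (1 - t) * self_similar sigma t y) + b) t x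
    (a * (((x ^ 2 / (1 - t) - 1) * self_similar sigma t x + sigma * x) / (2 * (1 - t))))
    (a * ((self_similar sigma t x + x * (sigma + x / (1 - t) * self_similar sigma t x))
          / (1 - t))))
    as [HL HLop]; [exact Vt | exact Vx | | | | split; [exact HL | rewrite HLop]].
  - pose proof (is_derive_self_similar_t sigma t sigma_sign t_lt1 x) as D.
    auto_derive; [eexists; exact D |].
    replace (Derive _ t) with (((x ^ 2 / (1 - t) - 1) * self_similar sigma t x + sigma * x)
      / (2 * (1 - t))) by (symmetry; now apply is_derive_unique); ring.
  - intros y; pose proof (is_derive_self_similar_x sigma t sigma_sign t_lt1 y) as D.
    auto_derive; [eexists; exact D |].
    replace (Derive _ y) with (sigma + y / (1 - t) * self_similar sigma t y)
      by (symmetry; now apply is_derive_unique); ring.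
  - pose proof (is_derive_self_similar_x sigma t sigma_sign t_lt1 x) as D.
    auto_derive; [eexists; exact D |].
    replace (Derive _ x) with (sigma + x / (1 - t) * self_similar sigma t x)
      by (symmetry; now apply is_derive_unique); field; lra.
  - field; lra.
Qed.

Lemma self_similar_unfold sigma t x : sigma = 1 \/ sigma = -1 ->
  self_similar sigma t x
  = sqrt (1 - t) * sqrt (2 * PI) * Phi (sigma * x / sqrt (1 - t)) * exp (x ^ 2 / (2 * (1 - t))).
Proof.
  intros sigma_sign; unfold self_similar, Phi_ratio.
  destruct (Req_dec (sqrt (1 - t)) 0) as [-> | r_neq0]; [ring |].
  assert (r_sq : sqrt (1 - t) * sqrt (1 - t) = 1 - t).
  { apply sqrt_sqrt; destruct (Rle_dec 0 (1 - t)); [lra|].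
    now rewrite sqrt_neg_0 in r_neq0 by lra. }
  replace ((sigma * x / sqrt (1 - t)) ^ 2 / 2) with (x ^ 2 / (2 * (1 - t))); [ring |].
  set (r := sqrt (1 - t)) in *; rewrite <- r_sq.
  destruct sigma_sign as [-> | ->]; field; auto.
Qed.

Lemma locally_boundary (C : R) (P : R -> Prop) (t : R) :
  open P -> P (C * sqrt (1 - t)) -> locally t (fun s => P (C * sqrt (1 - s))).
Proof.
  intros P_open Pt.
  assert (cont : continuous (fun s => C * sqrt (1 - s)) t).
  { apply (continuous_scal_r C (fun s => sqrt (1 - s))).
    apply (continuous_comp (fun s => 1 - s) sqrt); [|apply continuous_sqrt].
    apply (continuous_minus (fun _ => 1) (fun s => s)); [apply continuous_const | apply continuous_id]. }
  exact (cont P (P_open _ Pt)).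
Qed.

Lemma Vstar_above (Bs Cs s y : R) : Cs * sqrt (1 - s) < y ->
  Vstar Bs Cs s y = v Bs Cs * self_similar (-1) s y + 0 * y.
Proof.
  intros above; rewrite self_similar_unfold by auto.
  unfold Vstar; destruct Rlt_dec; [|contradiction].
  replace (-1 * y) with (- y) by ring; ring.
Qed.

Lemma Vstar_below (Bs Cs s y : R) : 0 <= Bs -> Cs < 0 -> y < Cs * sqrt (1 - s) ->
  Vstar Bs Cs s y = (1 - Bs ^ 2) * self_similar 1 s y + -1 * y.
Proof.
  intros Bs_ge0 Cs_lt0 below; rewrite self_similar_unfold by auto.
  pose proof (sqrt_pos (1 - s)).
  unfold Vstar, Defs.f, Defs.U; destruct Rlt_dec; [lra|].
  destruct Rlt_dec; [|nra].
  rewrite sqrt_mult_alt by (generalize PI_RGT_0; lra).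
  replace (1 * y) with y by ring; ring.
Qed.

Theorem lemma3p4 (Bs Cs : R)
  (HBpos : 0 < Bs) (HBeq : Beq Bs)
  (HBuniq : forall B, 0 < B -> Beq B -> B = Bs)
  (HCneg : Cs < 0) (HCeq : u Bs Cs = 0)
  (HCuniq : forall C, C < 0 -> u Bs C = 0 -> C = Cs) :
  (forall t x, 0 <= t < 1 -> Cs * sqrt (1 - t) < x ->
     L_defined (Vstar Bs Cs) t x /\ Lop (Vstar Bs Cs) t x = 0) /\
  (forall t x, 0 <= t < 1 -> x < Cs * sqrt (1 - t) ->
     L_defined (Vstar Bs Cs) t x /\ Lop (Vstar Bs Cs) t x <= 0).
Proof.
  split; intros t x t_range x_side.
  - destruct (Lop_self_similar_affine (Vstar Bs Cs) (-1) (v Bs Cs) 0 t x) as [HL HLop].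
    + now right.
    + lra.
    + apply (filter_imp (fun s => Cs * sqrt (1 - s) < x)); [intros s; apply Vstar_above|].
      exact (locally_boundary Cs (fun z => z < x) t (open_lt x) x_side).
    + apply (filter_imp (fun y => Cs * sqrt (1 - t) < y)); [intros y; apply Vstar_above|].
      exact (open_gt _ _ x_side).
    + split; [exact HL|]; rewrite HLop; field; lra.
  - destruct (Lop_self_similar_affine (Vstar Bs Cs) 1 (1 - Bs ^ 2) (-1) t x) as [HL HLop].
    + now left.
    + lra.
    + apply (filter_imp (fun s => x < Cs * sqrt (1 - s))); [intros s; apply Vstar_below; lra|].
      exact (locally_boundary Cs (fun z => x < z) t (open_gt x) x_side).
    + apply (filter_imp (fun y => y < Cs * sqrt (1 - t))); [intros y; apply Vstar_below; lra|].
      exact (open_lt _ _ x_side).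
    + split; [exact HL|]; rewrite HLop.
      assert (x_neg : x < 0) by (pose proof (sqrt_pos (1 - t)); nra).
      replace (- -1 * x / (1 - t)) with (x * / (1 - t)) by (field; lra).
      assert (0 < / (1 - t)) by (apply Rinv_0_lt_compat; lra); nra.
Qed.
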